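(* Let $q\ge 2$ and let $f:\mathbb{N}\to\{0,1\}$ be a multiplicative $q$-automatic sequence such that the set $\mathbb{P}_0=\{p \text{ prime}: f(p)=0\}$ is infinite. Then $f(p)=0$ for all sufficiently large primes $p$.
   Context: $f$ multiplicative means $f(mn)=f(m)f(n)$ whenever $\gcd(m,n)=1$; $f$ is $q$-automatic if its $q$-kernel $\{\{f(q^in+r)\}_{n\ge 0}: i\ge 1, 0\le r\le q^i-1\}$ is a finite set of sequences. *)

From mathcomp Require Import all_boot.
Set Implicit Arguments. Unset Strict Implicit. Unset Printing Implicit Defensive.

Definition multiplicative (f : nat -> nat) : Prop :=
  forall m n : nat, coprime m n -> f (m * n) = f m * f n.

Definition kernel_seq (f : nat -> nat) (q i r : nat) : nat -> nat :=
  fun n => f (q ^ i * n + r).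

Definition automatic (q : nat) (f : nat -> nat) : Prop :=
  exists L : seq (nat -> nat),
    forall i r : nat, 1 <= i -> r < q ^ i ->
      exists2 k : nat, k < size L &
        forall n : nat, kernel_seq f q i r n = nth (fun _ => 0) L k n.

From mathcomp Require Import all_boot zify.
From mathcomp Require Import cyclic.
From Stdlib Require Import Classical ClassicalEpsilon ArithRing.

(* If f(1) = 0 then f vanishes identically, so assume
   f(1) = 1 and, for a contradiction, that f(p) = 1 for infinitely many primes.
   1. Automaticity and the pigeonhole principle applied to the kernel sequences
      n |-> f(q^i n + 1) give i and Q = q^e > 1 with f(Q y + 1) = f(y + 1)
      whenever q^i | y  (kernel_period).
   2. Multiplying distinct primes with f = 1 and applying the pigeonhole
      principle to prefix products modulo q^i gives c > 1 with f(c) = 1,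
      c = 1 mod q^i and c coprime to all small numbers  (one_mod_witness).
   3. For m in {Q, Q^2} the affine map y |-> c m y + (c - 1) satisfies
      c m y + c = c (m y + 1), hence preserves f(y + 1) on a suitable set of
      "admissible" y; so do all compositions and iterates  (twist_transports).
   4. For a prime P > c Q with f(P) = 0, two compositions of these maps differ
      by a constant prime to P; one of them is an affine map whose multiplier
      is 1 mod P^2 and whose constant term is prime to P.  Its orbit of 0
      reaches some y = P - 1 mod P^2, so y + 1 = P (k P + 1) and
      1 = f(1) = f(y + 1) = f(P) f(k P + 1) = 0  (transport_contradiction). *)

Lemma pigeonhole_nat (h : nat -> nat) (s : nat) :
  (forall k, k <= s -> h k < s) -> exists j k, j < k /\ k <= s /\ h j = h k.
Proof.
case: s => [|s] h_lt; first by have := h_lt 0 (leqnn 0).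
pose g (x : 'I_s.+2) : 'I_s.+1 := Ordinal (h_lt x (ltn_ord x)).
have : ~~ injectiveb g.
  apply/negP => /injectiveP g_inj; have := leq_card _ g_inj.
  by rewrite !card_ord ltnn.
case/injectivePn => x [y] x_neq_y /(congr1 val) /= h_xy.
case: (ltngtP x y) => [lt_xy|lt_yx|eq_xy].
- by exists x, y; split => //; split => //; rewrite -ltnS.
- by exists y, x; split => //; split => //; rewrite -ltnS.
- by move: x_neq_y; rewrite (val_inj eq_xy) eqxx.
Qed.

Lemma coprime_prod_nat (F : nat -> nat) (n j k : nat) :
  (forall t, j <= t < k -> coprime (F t) n) -> coprime (\prod_(j <= t < k) F t) n.
Proof.
move=> F_cop; rewrite big_seq_cond; apply: (big_ind (coprime^~ n)) => [|a b|t].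
- exact: coprime1n.
- by rewrite coprimeMl => -> ->.
- by rewrite mem_index_iota andbT; apply: F_cop.
Qed.

Lemma multiplicative_prod (f F : nat -> nat) (j k : nat) :
  multiplicative f -> f 1 = 1 ->
  (forall s t, j <= s < k -> j <= t < k -> s != t -> coprime (F s) (F t)) ->
  f (\prod_(j <= t < k) F t) = \prod_(j <= t < k) f (F t).
Proof.
move=> f_mul f1; elim: k => [|k IHk] F_cop; first by rewrite !big_geq.
case: (leqP j k) => [le_jk|lt_kj]; last by rewrite !big_geq.
rewrite !big_nat_recr //= f_mul ?IHk //.
  by move=> s t /andP[js sk] /andP[jt tk]; apply: F_cop; lia.
apply: coprime_prod_nat => t /andP[jt tk]; apply: F_cop; lia.
Qed.

(* If c divides y + 1 and is coprime to m - 1, then c is coprime to m y + 1,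
   because m (y + 1) = (m y + 1) + (m - 1). *)
Lemma coprime_affine_step (c m y : nat) :
  0 < m -> coprime c (m - 1) -> c %| y.+1 -> coprime c (m * y + 1).
Proof.
move=> m_gt0 c_cop c_dvd; rewrite /coprime; set g := gcdn _ _.
have g_c : g %| c by apply: dvdn_gcdl.
have g_my : g %| m * y.+1 by apply/dvdn_mull/(dvdn_trans g_c).
have split_my : m * y.+1 = (m * y + 1) + (m - 1) by lia.
rewrite split_my (dvdn_addr _ (dvdn_gcdr _ _)) in g_my.
have : g %| gcdn c (m - 1) by rewrite dvdn_gcd g_c g_my.
by move: c_cop; rewrite /coprime => /eqP ->; rewrite dvdn1.
Qed.

Lemma increasing_witnesses (P : nat -> Prop) (B : nat) :
  (forall N, exists p, N < p /\ P p) ->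
  exists p_ : nat -> nat,
    (forall k, P (p_ k) /\ B < p_ k) /\ {homo p_ : s t / s < t}.
Proof.
move=> P_unbounded.
pose next N := proj1_sig (constructive_indefinite_description _ (P_unbounded N)).
have nextP N : N < next N /\ P (next N).
  exact: proj2_sig (constructive_indefinite_description _ (P_unbounded N)).
exists (fun k => iter k.+1 next B); split; last first.
  apply: (@homo_ltn _ _ (fun a b => a < b)) => [s t u|k]; first exact: ltn_trans.
  exact: (proj1 (nextP _)).
elim=> [|k [_ B_lt]]; first exact/and_comm/(nextP B).
have [lt_next Pnext] := nextP (iter k.+1 next B).
by split; last exact: ltn_trans lt_next.
Qed.

(* Among the blocks of a sequence of positive numbers coprime to M, some block
   product is 1 modulo M (pigeonhole on prefix products). *)
Lemma block_prod_one_mod (M : nat) (p_ : nat -> nat) :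
  0 < M -> (forall k, 0 < p_ k /\ coprime (p_ k) M) ->
  exists j k, j < k /\ M %| \prod_(j <= t < k) p_ t - 1.
Proof.
move=> M_gt0 p_ok; pose pre k := \prod_(0 <= t < k) p_ t.
have [j [k [lt_jk [_ e]]]] : exists j k, j < k /\ k <= M /\ pre j %% M = pre k %% M.
  by apply: pigeonhole_nat => t _; rewrite ltn_pmod.
exists j, k; split => //.
have split_pre : pre k = pre j * \prod_(j <= t < k) p_ t.
  by rewrite /pre -big_cat_nat // ltnW.
have block_gt0 : 0 < \prod_(j <= t < k) p_ t.
  by apply: prodn_gt0 => t; case: (p_ok t).
have pre_cop : coprime (pre j) M by apply: coprime_prod_nat => t _; case: (p_ok t).
move/eqP: e; rewrite eq_sym eqn_mod_dvd; last by rewrite split_pre leq_pmulr.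
by rewrite split_pre -{2}(muln1 (pre j)) -mulnBr Gauss_dvdr // coprime_sym.
Qed.

Lemma one_mod_witness (f : nat -> nat) (M B : nat) :
  multiplicative f -> f 1 = 1 -> 0 < M ->
  (forall N, exists p, N < p /\ prime p /\ f p = 1) ->
  (forall p, prime p -> B < p -> coprime p M) ->
  exists c, [/\ 1 < c, M %| c - 1, f c = 1 & forall n, 0 < n <= B -> coprime c n].
Proof.
move=> f_mul f1 M_gt0 f_ones M_small.
have [p_ [p_ok p_mono]] := increasing_witnesses _ B f_ones.
have p_prime k : prime (p_ k) by case: (p_ok k) => [[]].
have [j [k [lt_jk c_mod]]] : exists j k, j < k /\ M %| \prod_(j <= t < k) p_ t - 1.
  apply: block_prod_one_mod => // t; rewrite prime_gt0 // M_small //.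
  by case: (p_ok t).
have p_cop s t : s != t -> coprime (p_ s) (p_ t).
  rewrite prime_coprime // dvdn_prime2 // !neq_ltn.
  by case/orP => /p_mono ->; rewrite ?orbT.
exists (\prod_(j <= t < k) p_ t); split => //.
- rewrite big_ltn //; have := prime_gt1 (p_prime j).
  have : 0 < \prod_(j.+1 <= t < k) p_ t by apply: prodn_gt0 => t; apply: prime_gt0.
  move: (p_ j) (\prod_(_ <= _ < _) _) => a b; nia.
- rewrite multiplicative_prod // => [|s t _ _]; last exact: p_cop.
  by rewrite big1 // => t _; case: (p_ok t) => [[]].
- move=> n /andP[n_gt0 n_le]; apply: coprime_prod_nat => t _.
  rewrite prime_coprime //; apply/negP => /(dvdn_leq n_gt0).
  by case: (p_ok t) => _; lia.
Qed.

(* Step 1: automaticity forces f(Q y + 1) = f(y + 1) for Q = q^e > 1 and all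
   multiples y of some q^i: two kernel sequences n |-> f(q^(i+1) n + 1) must
   coincide. *)
Lemma kernel_period (q : nat) (f : nat -> nat) :
  1 < q -> automatic q f ->
  exists i e, 0 < e /\ forall y, q ^ i %| y -> f (q ^ e * y + 1) = f (y + 1).
Proof.
move=> q_gt1 [L L_ok].
have kernel_idx k : exists x, x < size L /\
    forall n, kernel_seq f q k.+1 1 n = nth (fun _ => 0) L x n.
  have one_lt : 1 < q ^ k.+1 by rewrite -(expn0 q) ltn_exp2l.
  by have [x x_lt x_eq] := L_ok k.+1 1 isT one_lt; exists x.
pose idx k := proj1_sig (constructive_indefinite_description _ (kernel_idx k)).
have idxP k : idx k < size L /\
    forall n, kernel_seq f q k.+1 1 n = nth (fun _ => 0) L (idx k) n.
  exact: proj2_sig (constructive_indefinite_description _ (kernel_idx k)).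
have [j [k [lt_jk [_ same]]]] := pigeonhole_nat idx (size L) (fun k _ => proj1 (idxP k)).
exists j.+1, (k - j); split; first by rewrite subn_gt0.
move=> y /dvdnP [n ->].
have row_j := proj2 (idxP j) n; have row_k := proj2 (idxP k) n.
rewrite /kernel_seq same in row_j; rewrite /kernel_seq in row_k.
have -> : q ^ (k - j) * (n * q ^ j.+1) = q ^ k.+1 * n.
  by rewrite mulnCA -expnD addnS subnK ?(ltnW lt_jk) // mulnC.
by rewrite row_k mulnC row_j.
Qed.

Definition affine (m : nat) (F : nat -> nat) : Prop := forall y, F y = m * y + F 0.

Lemma affine_comp (m1 m2 : nat) (F G : nat -> nat) :
  affine m1 F -> affine m2 G -> affine (m1 * m2) (F \o G).
Proof.
move=> F_aff G_aff y /=; rewrite G_aff (F_aff (_ + _)) (F_aff (G 0)).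
move: (G 0) (F 0) => a b; nia.
Qed.

Lemma affine_iter (m k : nat) (F : nat -> nat) :
  affine m F -> affine (m ^ k) (iter k F).
Proof.
move=> F_aff; elim: k => [|k IHk] y /=; first by rewrite mul1n addn0.
rewrite IHk (F_aff (_ + _)) (F_aff (iter k F 0)) expnS.
move: (m ^ k) (iter k F 0) (F 0) => a b z; nia.
Qed.

(* An affine map with multiplier 1 mod d acts on residues mod d as a
   translation by F 0, so its orbit of 0 visits n * F 0 mod d. *)
Lemma affine_iter_mod (m d : nat) (F : nat -> nat) :
  affine m F -> m = 1 %[mod d] -> forall n, iter n F 0 = n * F 0 %[mod d].
Proof.
move=> F_aff m_mod; elim=> [|n IHn] //=.
rewrite F_aff -modnDml -modnMml m_mod modnMml mul1n modnDml.
by rewrite -modnDml IHn modnDml mulSn addnC.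
Qed.

Lemma affine_orbit_residue (m d : nat) (F : nat -> nat) :
  0 < d -> affine m F -> m = 1 %[mod d] -> coprime (F 0) d ->
  forall r, exists n, iter n F 0 = r %[mod d].
Proof.
move=> d_gt0 F_aff m_mod F0_cop r; exists (r * F 0 ^ (totient d).-1).
rewrite (affine_iter_mod _ _ _ F_aff m_mod) -mulnA -expnSr prednK ?totient_gt0 //.
by rewrite -modnMmr Euler_exp_totient // modnMmr muln1.
Qed.

Lemma residue_below_prime_square (P y : nat) :
  0 < P -> y = P - 1 %[mod P ^ 2] -> y.+1 = P * (y %/ P ^ 2 * P + 1).
Proof.
move=> P_gt0 y_mod; have small : P - 1 < P ^ 2 by rewrite -mulnn; nia.
rewrite {1}(divn_eq y (P ^ 2)) y_mod modn_small // -mulnn.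
by move: (y %/ (P * P)) => k; nia.
Qed.

Section Transport.

Variables (f : nat -> nat) (D Q c : nat).
Hypotheses (f_mul : multiplicative f) (f1 : f 1 = 1).
Hypotheses (c_gt1 : 1 < c) (c_mod : D %| c - 1) (fc : f c = 1).
Hypothesis Q_period : forall y, D %| y -> f (Q * y + 1) = f (y + 1).

Lemma period_sq (y : nat) : D %| y -> f (Q * Q * y + 1) = f (y + 1).
Proof. by move=> D_y; rewrite -mulnA Q_period ?dvdn_mull // Q_period. Qed.

(* The set on which the twisted maps below preserve f(y + 1). *)
Definition admissible (y : nat) : bool := (D %| y) && ((y == 0) || (c %| y.+1)).

Definition transports (F : nat -> nat) : Prop :=
  forall y, admissible y -> admissible (F y) /\ f (F y).+1 = f y.+1.

Lemma transports_comp (F G : nat -> nat) :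
  transports F -> transports G -> transports (F \o G).
Proof.
by move=> F_tr G_tr y /G_tr [/F_tr [adm_FG f_FG] f_G]; split => //=; rewrite f_FG.
Qed.

Lemma transports_iter (F : nat -> nat) (k : nat) :
  transports F -> transports (iter k F).
Proof.
move=> F_tr; elim: k => [|k IHk] y adm_y //=.
have [adm_k f_k] := IHk y adm_y; have [adm_Sk f_Sk] := F_tr _ adm_k.
by split; rewrite // f_Sk.
Qed.

(* The twisted map y |-> c m y + (c - 1); note twist m y + 1 = c (m y + 1). *)
Definition twist (m y : nat) : nat := c * m * y + (c - 1).

Lemma twist_affine (m : nat) : affine (c * m) (twist m).
Proof. by move=> y; rewrite /twist muln0. Qed.

Lemma twist_transports (m : nat) :
  0 < m -> coprime c (m - 1) ->
  (forall y, D %| y -> f (m * y + 1) = f (y + 1)) -> transports (twist m).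
Proof.
move=> m_gt0 c_cop m_period y /andP[D_y y_ok].
have twistS : (twist m y).+1 = c * (m * y + 1) by rewrite /twist; lia.
have cop_my : coprime c (m * y + 1).
  case/orP: y_ok => [/eqP ->|c_y]; first by rewrite muln0 coprimen1.
  exact: coprime_affine_step.
split; last by rewrite twistS f_mul // fc mul1n m_period // addn1.
by rewrite /admissible twistS dvdn_mulr ?orbT ?andbT // dvdn_add ?dvdn_mull.
Qed.

Lemma twist_commutator (z : nat) :
  0 < Q ->
  twist (Q * Q) (twist Q z) = twist Q (twist (Q * Q) z) + c * Q * (c - 1) * (Q - 1).
Proof.
rewrite /twist; case: Q => [//|Q'] _; case: c c_gt1 => [//|c'] _.
by rewrite !subn1 /= -!plusE -!multE; ring.
Qed.

Hypotheses (Q_gt1 : 1 < Q) (c_cop_Q : coprime c (Q - 1)).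
Hypothesis c_cop_QQ : coprime c (Q * Q - 1).

Variable P : nat.
Hypotheses (P_prime : prime P) (c_lt_P : c < P) (Q_lt_P : Q < P).

Lemma small_coprime_P (n : nat) : 0 < n -> n < P -> coprime n P.
Proof.
move=> n_gt0 n_lt; rewrite coprime_sym prime_coprime //.
by apply/negP => /(dvdn_leq n_gt0); rewrite leqNgt n_lt.
Qed.

Lemma transporting_translation :
  exists F M, [/\ affine M F, M = 1 %[mod P ^ 2], transports F & coprime (F 0) (P ^ 2)].
Proof.
have Q_gt0 : 0 < Q by lia.
have X_tr : transports (twist Q) by apply: twist_transports.
have Y_tr : transports (twist (Q * Q)).
  by apply: twist_transports; rewrite ?muln_gt0 ?Q_gt0 //; apply: period_sq.
pose E := totient (P ^ 2); pose M0 := c * (Q * Q) * (c * Q).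
have P_gt0 : 0 < P := prime_gt0 P_prime.
have E_gt0 : 0 < E by rewrite totient_gt0 expn_gt0 P_gt0.
pose Z := iter E.-1 (twist (Q * Q) \o twist Q).
pose W1 := twist Q \o (twist (Q * Q) \o Z).
pose W2 := twist (Q * Q) \o (twist Q \o Z).
have M0_pow : M0 ^ E = M0 * M0 ^ E.-1 by rewrite -expnS prednK.
have Z_aff : affine (M0 ^ E.-1) Z by apply/affine_iter/affine_comp; apply: twist_affine.
have W1_aff : affine (M0 ^ E) W1.
  have -> : M0 ^ E = c * Q * (c * (Q * Q) * M0 ^ E.-1).
    by rewrite M0_pow /M0; move: (M0 ^ E.-1) => t; nia.
  by do 2 (apply: affine_comp; first exact: twist_affine).
have W2_aff : affine (M0 ^ E) W2.
  have -> : M0 ^ E = c * (Q * Q) * (c * Q * M0 ^ E.-1).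
    by rewrite M0_pow /M0 !mulnA.
  by do 2 (apply: affine_comp; first exact: twist_affine).
have M_mod : M0 ^ E = 1 %[mod P ^ 2].
  by apply: Euler_exp_totient; rewrite coprimeXr // !coprimeMl !small_coprime_P //; lia.
have W_tr : transports W1 /\ transports W2.
  by split; do 2 apply: transports_comp => //; apply/transports_iter/transports_comp.
have W_gap : W2 0 = W1 0 + c * Q * (c - 1) * (Q - 1).
  by rewrite /W1 /W2 /= twist_commutator //; lia.
have gap_ndvd : ~~ (P %| c * Q * (c - 1) * (Q - 1)).
  by rewrite -prime_coprime // coprime_sym !coprimeMl !small_coprime_P //; lia.
have cop_P2 F : ~~ (P %| F 0) -> coprime (F 0) (P ^ 2).
  by move=> ndvd; rewrite coprimeXr // coprime_sym prime_coprime.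
have [P_W1|nP_W1] := boolP (P %| W1 0).
  exists W2, (M0 ^ E); split; rewrite ?cop_P2 //; first by case: W_tr.
  by rewrite W_gap dvdn_addr.
by exists W1, (M0 ^ E); split; rewrite ?cop_P2 //; case: W_tr.
Qed.

Hypothesis fP : f P = 0.

(* Step 4b: iterating the translation from 0 reaches y = P - 1 mod P^2, where
   f(y + 1) = f(1) = 1 but also f(y + 1) = f(P) f(k P + 1) = 0. *)
Lemma transport_contradiction : False.
Proof.
have [F [M [F_aff M_mod F_tr F0_cop]]] := transporting_translation.
have P_gt0 : 0 < P := prime_gt0 P_prime.
have P2_gt0 : 0 < P ^ 2 by rewrite expn_gt0 P_gt0.
have [n orbit_mod] := affine_orbit_residue _ _ _ P2_gt0 F_aff M_mod F0_cop (P - 1).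
have adm0 : admissible 0 by rewrite /admissible dvdn0.
have [_] := transports_iter _ n F_tr 0 adm0.
rewrite f1 (residue_below_prime_square _ _ P_gt0 orbit_mod) f_mul ?fP //.
by rewrite -coprime_modr modnMDl coprime_modr coprimen1.
Qed.

End Transport.

Theorem proposition3 (q : nat) (f : nat -> nat) :
  2 <= q ->
  (forall n : nat, f n = 0 \/ f n = 1) ->
  multiplicative f ->
  automatic q f ->
  (forall N : nat, exists p : nat, N < p /\ prime p /\ f p = 0) ->
  exists N : nat, forall p : nat, prime p -> N < p -> f p = 0.
Proof.
move=> q_ge2 f01 f_mul f_aut f_zeros.
have [f1_0|f1] := f01 1.
  by exists 0 => p _ _; rewrite -(muln1 p) f_mul ?coprimen1 // f1_0 muln0.
apply: NNPP => no_bound.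
have f_ones N : exists p, N < p /\ prime p /\ f p = 1.
  apply: NNPP => no_one; apply: no_bound; exists N => p p_prime lt_Np.
  by case: (f01 p) => // fp1; case: no_one; exists p.
have [i [e [e_gt0 period]]] := kernel_period q f q_ge2 f_aut.
set Q := q ^ e in period.
have q_le_Q : q <= Q by rewrite -{1}(expn1 q) leq_pexp2l // ltnW.
have [c [c_gt1 c_mod fc c_small]] : exists c, [/\ 1 < c, q ^ i %| c - 1, f c = 1 &
    forall n, 0 < n <= Q * Q -> coprime c n].
  apply: one_mod_witness => //; first by rewrite expn_gt0 ltnW.
  move=> p p_prime lt_QQp; rewrite coprimeXr // prime_coprime //.
  by apply/negP => /(dvdn_leq (ltnW q_ge2)); nia.
have [P [lt_cQP [P_prime fP]]] := f_zeros (c * Q).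
have Q_gt1 : 1 < Q by lia.
apply: (transport_contradiction f (q ^ i) Q c) P_prime _ _ fP => //.
- by apply: c_small; nia.
- by apply: c_small; nia.
- by nia.
- by nia.
Qed.
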